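(* Let $P=(p_1,\dots,p_S)$ be a probability distribution on $\{1,\dots,S\}$ and $\hat P_n$ the empirical distribution of $n$ i.i.d. samples from $P$. Then, as $n\to\infty$, the bias $b=\mathbb E[Q(\hat P_n)]-Q(P)$ satisfies $|b|=\mathcal O\big(S\log(n)/n\big)$, i.e. $b^2=\mathcal O\big((S\log(n)/n)^2\big)$.
   Context: For a probability vector $P=(p_1,\dots,p_S)$, $Q(P)=\sum_{k=1}^S p_k\log^2(p_k)$, with the convention $0\log^2 0=0$. The empirical distribution is $\hat P_n=(N_1/n,\dots,N_S/n)$ where $N_k$ is the number of samples equal to $k$. *)

From HB Require Import structures.
From mathcomp Require Import all_boot all_order all_algebra.
From mathcomp Require Import reals exp.
Set Implicit Arguments. Unset Strict Implicit. Unset Printing Implicit Defensive.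
Import Order.TTheory GRing.Theory Num.Theory.
Local Open Scope ring_scope.

Definition is_prob (R : realType) (S : nat) (p : 'I_S -> R) : Prop :=
  (forall k, 0 <= p k) /\ \sum_(k < S) p k = 1.

Definition Qfun (R : realType) (S : nat) (p : 'I_S -> R) : R :=
  \sum_(k < S) (if p k == 0 then 0 else p k * (ln (p k)) ^+ 2).

Definition count_k (S n : nat) (x : {ffun 'I_n -> 'I_S}) (k : 'I_S) : nat :=
  #|[set i | x i == k]|.

Definition empirical (R : realType) (S n : nat) (x : {ffun 'I_n -> 'I_S})
  : 'I_S -> R := fun k => (count_k x k)%:R / n%:R.

Definition sample_prob (R : realType) (S n : nat) (p : 'I_S -> R)
  (x : {ffun 'I_n -> 'I_S}) : R := \prod_(i < n) p (x i).

Definition expected_Q_emp (R : realType) (S n : nat) (p : 'I_S -> R) : R :=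
  \sum_(x : {ffun 'I_n -> 'I_S}) sample_prob p x * Qfun (empirical R x).

Definition bias (R : realType) (S n : nat) (p : 'I_S -> R) : R :=
  expected_Q_emp n p - Qfun p.

From HB Require Import structures.
From mathcomp Require Import all_boot all_order all_algebra.
From mathcomp Require Import reals sequences exp.
From mathcomp Require Import ring lra.
Import Order.TTheory GRing.Theory Num.Theory.
Local Open Scope ring_scope.

(* Fix a symbol k and write p = p_k, N = N_k, m = n p and h(x) = x ln^2 x.  Writing
   h(x) = p h'(x/p) with h'(y) = y (ln y + ln p)^2 and comparing ln y with y - 1 and
   1 - 1/y (together with y ln^2 y <= 4 (y - 1)^2) sandwiches n h(N/n) between two
   quadratic polynomials in N,
     N ln^2 p + 2 ln p N (N - m)/m <= n h(N/n) <= N ln^2 p + 2 ln p (N - m) + 4 (N - m)^2/m,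
   whose expectations follow from E N = m and E N^2 = m + m^2 - m p.  Hence
   n (E h(N/n) - h(p)) lies in [2 ln p (1 - p), 4 (1 - p)], which is within 4 ln n
   when p >= n^-2; when p < n^-2 one uses instead E h(N/n) >= 0 and n h(p) <= 16.
   Summing the per-symbol bound 4 ln n + 16 over the S symbols gives the theorem. *)

Section LnInequalities.
Context {R : realType}.
Implicit Types x y c : R.

Lemma ln_le_subr1 {x} : 0 < x -> ln x <= x - 1.
Proof. by move=> x0; have := expR_ge1Dx (ln x); rewrite lnK ?posrE //; lra. Qed.

Lemma ln_ge1BV {x} : 0 < x -> 1 - x^-1 <= ln x.
Proof.
by move=> x0; have := expR_ge1Dx (- ln x); rewrite expRN lnK ?posrE //; lra.
Qed.

(* With x = s^2 the claim reads (s ln s)^2 <= (s^2 - 1)^2, and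
   |s ln s| <= |s^2 - 1| follows from 1 + u <= e^u at u = ln s or u = - ln s. *)
Lemma mul_ln_sqr_le {x} : 0 < x -> x * ln x ^+ 2 <= 4 * (x - 1) ^+ 2.
Proof.
move=> x0; set u := ln x / 2; set s := expR u.
have xs : x = s * s by rewrite /s -expRD /u -splitr lnK ?posrE.
have -> : ln x = 2 * u by rewrite /u; field.
rewrite xs.
have s0 : 0 < s by apply: expR_gt0.
have [u0|u0] := leP 0 u.
  have su : 1 + u <= s by apply: expR_ge1Dx.
  have us : u * s <= s * s - 1 by nra.
  have us0 : 0 <= u * s by nra.
  have sq : (u * s) ^+ 2 <= (s * s - 1) ^+ 2 by nra.
  nra.
have s1 : s <= 1 by rewrite /s -expR0 ler_expR; exact: ltW.
have : 1 - u <= s^-1 by rewrite /s -expRN; apply: expR_ge1Dx.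
rewrite -(ler_pM2l s0) mulfV ?gt_eqF // => su.
have us : - u * s <= 1 - s * s by nra.
have us0 : 0 <= - u * s by nra.
have sq : (- u * s) ^+ 2 <= (1 - s * s) ^+ 2 by nra.
nra.
Qed.

Lemma sqr_mul_expR_le {x} : x <= 0 -> x ^+ 2 * expR x <= 16 * expR (x / 2).
Proof.
move=> x0; set b := - x / 4.
have b0 : 0 <= b by rewrite /b; lra.
have bb : b <= expR b by have := expR_ge1Dx b; lra.
have -> : expR (x / 2) = expR b ^+ 2 * expR x.
  by rewrite expr2 -!expRD /b; congr expR; field.
have -> : x ^+ 2 = 16 * b ^+ 2 by rewrite /b; field.
rewrite -mulrA ler_pM2l // ler_pM2r ?expR_gt0 //; nra.
Qed.

Lemma shifted_mul_ln_sqr_le {y c} : 0 < y -> c <= 0 ->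
  y * (ln y + c) ^+ 2 <= y * c ^+ 2 + 2 * c * (y - 1) + 4 * (y - 1) ^+ 2.
Proof.
move=> y0 c0; have sq := mul_ln_sqr_le y0.
have lin : y - 1 <= y * ln y.
  by have := ler_wpM2l (ltW y0) (ln_ge1BV y0); rewrite mulrBr mulr1 mulfV ?gt_eqF.
nra.
Qed.

Lemma shifted_mul_ln_sqr_ge {y c} : 0 < y -> c <= 0 ->
  y * c ^+ 2 + 2 * c * (y * (y - 1)) <= y * (ln y + c) ^+ 2.
Proof.
move=> y0 c0.
have gap : 0 <= y * (y - 1 - ln y).
  by apply: mulr_ge0; [exact: ltW | have := ln_le_subr1 y0; lra].
have sq : 0 <= y * ln y ^+ 2 by apply: mulr_ge0; [exact: ltW | exact: sqr_ge0].
nra.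
Qed.

End LnInequalities.

Definition xlnx2 {R : realType} (x : R) : R := if x == 0 then 0 else x * ln x ^+ 2.

Section XLnX2.
Context {R : realType}.
Implicit Types x p : R.

Lemma xlnx2_ge0 x : 0 <= x -> 0 <= xlnx2 x.
Proof. by move=> x0; rewrite /xlnx2; case: ifP => // _; rewrite mulr_ge0 ?sqr_ge0. Qed.

Lemma xlnx2_ratio {x p} : 0 < x -> 0 < p ->
  xlnx2 x = p * (x / p * (ln (x / p) + ln p) ^+ 2).
Proof.
move=> x0 p0; rewrite -lnM ?posrE ?divr_gt0 // divfK ?gt_eqF //.
by rewrite /xlnx2 gt_eqF //; field; rewrite gt_eqF.
Qed.

Lemma xlnx2_le_quadratic x p : 0 <= x -> 0 < p -> p <= 1 ->
  xlnx2 x <= x * ln p ^+ 2 + 2 * ln p * (x - p) + 4 * (x - p) ^+ 2 / p.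
Proof.
move=> x0 p0 p1; have lp := ln_le0 p1.
have [->|xp] := eqVneq x 0.
  rewrite /xlnx2 eqxx mul0r add0r sub0r sqrrN.
  have -> : 4 * p ^+ 2 / p = 4 * p by field; rewrite gt_eqF.
  nra.
have {xp}x0 : 0 < x by rewrite lt0r xp.
rewrite (xlnx2_ratio x0 p0).
have -> : x * ln p ^+ 2 + 2 * ln p * (x - p) + 4 * (x - p) ^+ 2 / p =
    p * (x / p * ln p ^+ 2 + 2 * ln p * (x / p - 1) + 4 * (x / p - 1) ^+ 2).
  by field; rewrite gt_eqF.
by rewrite ler_pM2l // shifted_mul_ln_sqr_le ?divr_gt0.
Qed.

Lemma quadratic_le_xlnx2 x p : 0 <= x -> 0 < p -> p <= 1 ->
  x * ln p ^+ 2 + 2 * ln p * (x * (x - p)) / p <= xlnx2 x.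
Proof.
move=> x0 p0 p1; have lp := ln_le0 p1.
have [->|xp] := eqVneq x 0.
  by rewrite /xlnx2 eqxx !(mul0r, mulr0, add0r).
have {xp}x0 : 0 < x by rewrite lt0r xp.
rewrite (xlnx2_ratio x0 p0).
have -> : x * ln p ^+ 2 + 2 * ln p * (x * (x - p)) / p =
    p * (x / p * ln p ^+ 2 + 2 * ln p * (x / p * (x / p - 1))).
  by field; rewrite gt_eqF.
by rewrite ler_pM2l // shifted_mul_ln_sqr_ge ?divr_gt0.
Qed.

(* x ln^2 x <= 16 sqrt x, from t^2 e^t <= 16 e^(t/2) at t = ln x. *)
Lemma xlnx2_small {x n} : 1 <= n -> 0 < x < n ^- 2 -> n * xlnx2 x <= 16.
Proof.
move=> n1 /andP[x0 xn]; have n0 : 0 < n by lra.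
have lx : ln x / 2 <= - ln n.
  have : ln x < ln (n ^- 2) by rewrite ltr_ln ?posrE ?invr_gt0 ?exprn_gt0.
  rewrite lnV ?posrE ?exprn_gt0 // lnXn // mulr2n; lra.
have x1 : x <= 1.
  by apply/ltW/(lt_le_trans xn); rewrite invf_le1 ?exprn_gt0 // exprn_ege1.
have := sqr_mul_expR_le (ln_le0 x1); rewrite lnK ?posrE // => le16.
have : expR (ln x / 2) <= expR (- ln n) by rewrite ler_expR.
rewrite expRN lnK ?posrE // => hn.
rewrite /xlnx2 gt_eqF // mulrC -ler_pdivlMr // mulrC.
by apply: le_trans le16 _; rewrite ler_pM2l.
Qed.
End XLnX2.

Definition expectation {R : realType} {S n : nat} (p : 'I_S -> R)
    (F : {ffun 'I_n -> 'I_S} -> R) : R :=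
  \sum_x sample_prob p x * F x.

Section Expectation.
Context {R : realType} {S n : nat} {p : 'I_S -> R}.
Implicit Types F G : {ffun 'I_n -> 'I_S} -> R.
Local Notation E := (expectation p).

Lemma eq_expectation {F G} : (forall x, F x = G x) -> E F = E G.
Proof. by move=> FG; apply: eq_bigr => x _; rewrite FG. Qed.

Lemma expectationD F G : E (fun x => F x + G x) = E F + E G.
Proof. by rewrite -big_split; apply: eq_bigr => x _; rewrite mulrDr. Qed.

Lemma expectationZ c F : E (fun x => c * F x) = c * E F.
Proof. by rewrite mulr_sumr; apply: eq_bigr => x _; rewrite mulrCA. Qed.

Lemma expectation_sum (F : 'I_n -> {ffun 'I_n -> 'I_S} -> R) :
  E (fun x => \sum_(i < n) F i x) = \sum_(i < n) E (F i).
Proof.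
by rewrite exchange_big; apply: eq_bigr => x _; rewrite mulr_sumr.
Qed.

Lemma expectation_ge0 F : (forall c, 0 <= p c) -> (forall x, 0 <= F x) -> 0 <= E F.
Proof.
by move=> p0 F0; apply: sumr_ge0 => x _; rewrite mulr_ge0 ?prodr_ge0.
Qed.

Lemma ler_expectation F G : (forall c, 0 <= p c) -> (forall x, F x <= G x) -> E F <= E G.
Proof.
by move=> p0 FG; apply: ler_sum => x _; rewrite ler_wpM2l ?prodr_ge0.
Qed.

Lemma expectation_prod (G : 'I_n -> 'I_S -> R) :
  E (fun x => \prod_(i < n) G i (x i)) = \prod_(i < n) \sum_(c < S) p c * G i c.
Proof.
by rewrite bigA_distr_bigA; apply: eq_bigr => x _; rewrite -big_split.
Qed.

Lemma prod_if_eq (a : 'I_n -> R) i : \prod_(l < n) (if l == i then a l else 1) = a i.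
Proof. by rewrite -big_mkcond big_pred1_eq. Qed.

Hypothesis p_sum1 : \sum_(c < S) p c = 1.

Lemma sum_prob_mulr1 : \sum_(c < S) p c * 1 = 1.
Proof. by under eq_bigr do rewrite mulr1. Qed.

Lemma expectation_cst a : E (fun _ : {ffun 'I_n -> 'I_S} => a) = a.
Proof.
have := expectation_prod (fun _ _ => 1); rewrite [RHS]big1 => [E1|i _]; last first.
  exact: sum_prob_mulr1.
rewrite -[a in RHS]mulr1 -E1 -expectationZ.
by apply: eq_expectation => x; rewrite big1 ?mulr1.
Qed.

Lemma expectation_coord (f : 'I_S -> R) (i : 'I_n) :
  E (fun x => f (x i)) = \sum_(c < S) p c * f c.
Proof.
transitivity (E (fun x => \prod_(l < n) (if l == i then f (x l) else 1))).
  by apply: eq_expectation => x; rewrite prod_if_eq.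
rewrite (expectation_prod (fun l c => if l == i then f c else 1)).
rewrite -(prod_if_eq (fun=> \sum_(c < S) p c * f c) i).
by apply: eq_bigr => l _; case: eqP => // _; rewrite sum_prob_mulr1.
Qed.

Lemma expectation_coord2 (f g : 'I_S -> R) (i j : 'I_n) : i != j ->
  E (fun x => f (x i) * g (x j)) =
  (\sum_(c < S) p c * f c) * (\sum_(c < S) p c * g c).
Proof.
move=> ij.
transitivity (E (fun x => \prod_(l < n)
    ((if l == i then f (x l) else 1) * (if l == j then g (x l) else 1)))).
  by apply: eq_expectation => x; rewrite big_split /= !prod_if_eq.
rewrite (expectation_prod (fun l c =>
  (if l == i then f c else 1) * (if l == j then g c else 1))).
rewrite -(prod_if_eq (fun=> \sum_(c < S) p c * f c) i).
rewrite -(prod_if_eq (fun=> \sum_(c < S) p c * g c) j) -big_split /=.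
apply: eq_bigr => l _; case: (eqVneq l i) => [->|_]; first rewrite (negbTE ij).
  by under eq_bigr do rewrite mulr1; rewrite mulr1.
case: eqP => _.
  by under eq_bigr do rewrite mul1r; rewrite mul1r.
by under eq_bigr do rewrite mulr1; rewrite sum_prob_mulr1 mulr1.
Qed.
End Expectation.

Section CountMoments.
Context {R : realType} {S n : nat} (p : 'I_S -> R) (k : 'I_S).
Hypothesis p_sum1 : \sum_(c < S) p c = 1.
Local Notation E := (expectation p).
Local Notation N x := ((@count_k S n x k)%:R : R).
Local Notation m := (n%:R * p k).

Lemma count_k_sum (x : {ffun 'I_n -> 'I_S}) : N x = \sum_(i < n) (x i == k)%:R.
Proof.
rewrite /count_k -sum1_card natr_sum big_mkcond /=.
by apply: eq_bigr => i _; rewrite inE; case: (x i == k).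
Qed.

Lemma sum_prob_indicator : \sum_(c < S) p c * (c == k)%:R = p k.
Proof.
rewrite (bigD1 k) //= eqxx mulr1 big1 ?addr0 // => c /negbTE ->.
by rewrite mulr0.
Qed.

Lemma expectation_count : E (fun x => N x) = m.
Proof.
rewrite (eq_expectation count_k_sum) expectation_sum.
under eq_bigr do rewrite (expectation_coord p_sum1 (fun c => (c == k)%:R)).
by rewrite sum_prob_indicator sumr_const card_ord mulr_natl.
Qed.

Lemma expectation_count_sqr : E (fun x => N x ^+ 2) = m + m ^+ 2 - m * p k.
Proof.
have pair i : \sum_(j < n) E (fun x => (x i == k)%:R * (x j == k)%:R) =
    p k + p k ^+ 2 *+ n.-1.
  rewrite (bigD1 i) //=; congr (_ + _).
    rewrite (expectation_coord p_sum1 (fun c => (c == k)%:R * (c == k)%:R)).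
    by rewrite -sum_prob_indicator; apply: eq_bigr => c _; case: (c == k); rewrite ?mulr1 ?mulr0.
  rewrite (eq_bigr (fun=> p k ^+ 2)) => [|j ij].
    by rewrite sumr_const cardC1 card_ord.
  have ji : i != j by rewrite eq_sym.
  rewrite (expectation_coord2 p_sum1 (fun c => (c == k)%:R) (fun c => (c == k)%:R) _ _ ji).
  by rewrite sum_prob_indicator expr2.
transitivity (\sum_(i < n) \sum_(j < n)
    E (fun x => (x i == k)%:R * (x j == k)%:R)).
  have sqr x : N x ^+ 2 =
      \sum_(i < n) \sum_(j < n) (x i == k)%:R * (x j == k)%:R.
    by rewrite count_k_sum expr2 mulr_suml; under eq_bigr do rewrite mulr_sumr.
  rewrite (eq_expectation sqr) (expectation_sum (fun i x =>
    \sum_(j < n) (x i == k)%:R * (x j == k)%:R)).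
  by apply: eq_bigr => i _; exact: (expectation_sum (fun j x =>
    (x i == k)%:R * (x j == k)%:R)).
under eq_bigr do rewrite pair.
rewrite sumr_const card_ord -[_ *+ n]mulr_natl -[_ *+ n.-1]mulr_natl.
have [->|n0] := posnP n; first by ring.
rewrite -subn1 natrB //; ring.
Qed.

Lemma expectation_count_quadratic a b c :
  E (fun x => a + b * N x + c * N x ^+ 2) = a + b * m + c * (m + m ^+ 2 - m * p k).
Proof.
rewrite !expectationD expectation_cst // !expectationZ.
by rewrite expectation_count expectation_count_sqr.
Qed.
End CountMoments.

Section SymbolBias.
Context {R : realType} {S n : nat} (p : 'I_S -> R) (k : 'I_S).
Hypothesis p_ge0 : forall c, 0 <= p c.
Hypothesis p_sum1 : \sum_(c < S) p c = 1.
Hypothesis n_gt0 : (0 < n)%N.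
Local Notation E := (expectation p).
Local Notation N x := ((@count_k S n x k)%:R : R).
Local Notation m := (n%:R * p k).
Local Notation EH := (E (fun x => xlnx2 (N x / n%:R))).

Let nR : 0 < n%:R :> R. Proof. by rewrite ltr0n. Qed.

Lemma prob_le1 : p k <= 1.
Proof. by rewrite -p_sum1 (bigD1 k) //= lerDl sumr_ge0. Qed.

Lemma expectation_xlnx2_count_prob0 : p k = 0 -> EH = 0.
Proof.
move=> pk0; apply: big1 => x _.
have [->|/card_gt0P[i]] := posnP (count_k x k); first by rewrite mul0r /xlnx2 eqxx mulr0.
by rewrite inE => /eqP xi; rewrite /sample_prob (bigD1 i) //= xi pk0 !mul0r.
Qed.

Lemma expectation_xlnx2_count_ub :
  0 < p k -> n%:R * EH <= n%:R * xlnx2 (p k) + 4 * (1 - p k).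
Proof.
move=> pk0; have m0 : 0 < m by rewrite mulr_gt0.
set lp := ln (p k).
rewrite -expectationZ (@le_trans _ _ (E (fun x => (- 2 * lp * m + 4 * m) +
    (lp ^+ 2 + 2 * lp - 8) * N x + 4 / m * N x ^+ 2))) //.
  apply: ler_expectation => // x.
  rewrite [leRHS](_ : _ = n%:R * (N x / n%:R * lp ^+ 2 +
      2 * lp * (N x / n%:R - p k) + 4 * (N x / n%:R - p k) ^+ 2 / p k)).
    by rewrite ler_pM2l // xlnx2_le_quadratic ?divr_ge0 ?prob_le1.
  by field; rewrite !gt_eqF.
rewrite expectation_count_quadratic // /xlnx2 gt_eqF // le_eqVlt; apply/predU1l.
by rewrite /lp; field; rewrite !gt_eqF.
Qed.

Lemma expectation_xlnx2_count_lb :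
  0 < p k -> n%:R * xlnx2 (p k) + 2 * ln (p k) * (1 - p k) <= n%:R * EH.
Proof.
move=> pk0; have m0 : 0 < m by rewrite mulr_gt0.
set lp := ln (p k).
rewrite -expectationZ (@le_trans _ _ (E (fun x => 0 +
    (lp ^+ 2 - 2 * lp) * N x + 2 * lp / m * N x ^+ 2))) //; last first.
  apply: ler_expectation => // x.
  rewrite [leLHS](_ : _ = n%:R * (N x / n%:R * lp ^+ 2 +
      2 * lp * (N x / n%:R * (N x / n%:R - p k)) / p k)).
    by rewrite ler_pM2l // quadratic_le_xlnx2 ?divr_ge0 ?prob_le1.
  by field; rewrite !gt_eqF.
rewrite expectation_count_quadratic // /xlnx2 gt_eqF // le_eqVlt; apply/predU1l.
by rewrite /lp; field; rewrite !gt_eqF.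
Qed.

Lemma expectation_xlnx2_count_bias :
  n%:R * `|EH - xlnx2 (p k)| <= 4 * ln n%:R + 16.
Proof.
have lnn : 0 <= ln (n%:R : R) by rewrite ln_ge0 // ler1n.
rewrite -[X in X * _](ger0_norm (ltW nR)) -normrM ler_norml mulrBr.
have [pk0|pk0] := eqVneq (p k) 0.
  rewrite expectation_xlnx2_count_prob0 // pk0 /xlnx2 eqxx mulr0 subrr.
  by apply/andP; split; lra.
have {}pk0 : 0 < p k by rewrite lt0r pk0 p_ge0.
have pk1 := prob_le1.
have ub := expectation_xlnx2_count_ub pk0.
apply/andP; split; last lra.
have [big|small] := leP (n%:R ^- 2) (p k).
  have lb := expectation_xlnx2_count_lb pk0.
  have : - (2 * ln (n%:R : R)) <= ln (p k).
    by rewrite mulr_natl -lnXn // -lnV ?posrE ?exprn_gt0 // ler_ln ?posrE ?invr_gt0 ?exprn_gt0.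
  have := ln_le0 pk1; nra.
have h16 : n%:R * xlnx2 (p k) <= 16 by apply: xlnx2_small; rewrite ?ler1n ?pk0.
have : 0 <= n%:R * EH.
  by rewrite mulr_ge0 // expectation_ge0 // => x; rewrite xlnx2_ge0 ?divr_ge0.
lra.
Qed.
End SymbolBias.

Lemma bias_sum_symbols (R : realType) (S n : nat) (p : 'I_S -> R) :
  bias n p = \sum_(k < S)
    (expectation p (fun x => xlnx2 ((@count_k S n x k)%:R / n%:R)) - xlnx2 (p k)).
Proof.
rewrite sumrB /bias; congr (_ - _).
by rewrite exchange_big; apply: eq_bigr => x _; rewrite mulr_sumr.
Qed.

Theorem mainTheorem7 (R : realType) :
  exists C : R, exists N0 : nat,
    forall (S : nat) (p : 'I_S -> R), is_prob p ->
    forall n : nat, (N0 <= n)%N ->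
      `|bias n p| <= C * S%:R * ln (n%:R) / n%:R.
Proof.
exists (4 + 16 / ln 2), 2%N => S p [p_ge0 p_sum1] n n2.
have n0 : (0 < n)%N by apply: leq_trans n2.
have nR : (0 : R) < n%:R by rewrite ltr0n.
have ln2 : (0 : R) < ln 2 by rewrite ln_gt0 // ltr1n.
have ln_ratio : 1 <= ln (n%:R : R) / ln 2.
  by rewrite ler_pdivlMr // mul1r ler_ln ?posrE // ?ler_nat // ltr0n.
rewrite bias_sum_symbols; apply: le_trans (ler_norm_sum _ _ _) _.
apply: le_trans (_ : \sum_(k < S) (4 * ln n%:R + 16) / n%:R <= _).
  apply: ler_sum => k _; rewrite ler_pdivlMr // mulrC.
  exact: expectation_xlnx2_count_bias.
rewrite sumr_const card_ord -[_ *+ S]mulr_natl.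
rewrite [leRHS](_ : _ = S%:R * ((4 + 16 / ln 2) * ln n%:R / n%:R)); last by ring.
apply: ler_wpM2l; first exact: ler0n.
rewrite ler_pM2r ?invr_gt0 //.
have : 16 <= 16 / ln 2 * ln (n%:R : R) by rewrite mulrAC -mulrA ler_peMr.
lra.
Qed.
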